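(* Let $\hat k\ge 2$ be an integer and $n=\hat k^2$. Define $\tilde P:\mathbb{R}^n\to\mathbb{R}$ by $$\tilde P(c)=\sum_{i=1}^{n}\frac{e^{c_i}}{\sum_{v=1}^{n}e^{c_v}}\,c_i .$$ Then for all $c,c'\in\mathbb{R}^n$, $$|\tilde P(c)-\tilde P(c')|\le(\hat k^2-1)\max_{1\le i\le n}|c_i-c_i'| .$$
   Context: $\tilde P$ is the SoftPool operation applied to one $\hat k\times\hat k$ kernel region of a feature map, whose $\hat k^2$ entries are listed as the vector $c$: each entry is weighted by the softmax of the entries in the region and the weighted entries are summed. *)

From mathcomp Require Import all_boot all_order all_algebra.
From mathcomp Require Import reals.
From mathcomp Require Import sequences exp.
Set Implicit Arguments. Unset Strict Implicit. Unset Printing Implicit Defensive.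
Import Order.TTheory GRing.Theory Num.Theory.
Local Open Scope ring_scope.

Definition softpool (R : realType) (n : nat) (c : 'I_n -> R) : R :=
  \sum_(i < n) (expR (c i) / \sum_(v < n) expR (c v)) * c i.

(* max_i |c_i - c'_i| (nonnegative terms, so 0 is a neutral start) *)
Definition maxdist (R : realType) (n : nat) (c c' : 'I_n -> R) : R :=
  \big[Num.max/0]_(i < n) `|c i - c' i|.

From mathcomp Require Import all_boot all_order all_algebra.
From mathcomp Require Import reals.
From mathcomp Require Import sequences exp.
From mathcomp Require Import all_classical topology normedtype derive realfun.
From mathcomp Require Import ring lra.
Set Implicit Arguments. Unset Strict Implicit. Unset Printing Implicit Defensive.
Import Order.TTheory GRing.Theory Num.Theory.
Import numFieldNormedType.Exports.
Local Open Scope ring_scope.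

(* Move the regions along the segment a(s) = c' + s (c - c').  With softmax
   weights p_i and P = softpool a, the derivative of s |-> softpool (a s) is
   sum_i p_i d_i (1 + a_i - P), so by the mean value theorem it suffices to
   bound sum_i p_i |1 + a_i - P| by n - 1.  As P <= a_m := max_i a_i and
   sum_i p_i (1 + a_i - P) = 1, that sum is at most 1 + 2 sum_(i <> m) p_i g_i
   with g_i = max(0, a_m - a_i - 1); since p_i <= exp (a_i - a_m) and
   (x - 1) exp (-x) <= 1/3, the bound is 1 + 2 (n - 1)/3 <= n - 1 once n >= 4. *)

Lemma expR_ge_3_subr1 (R : realType) (x : R) : 3 * (x - 1) <= expR x.
Proof.
have [x_le1|x_gt1] := lerP x 1; first by apply: le_trans (expR_ge0 x); lra.
have sqr_half : expR x = expR (x / 2) * expR (x / 2).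
  by rewrite -expRD; congr expR; field.
have lin_half := expR_ge1Dx (x / 2).
have : (1 + x / 2) * (1 + x / 2) <= expR (x / 2) * expR (x / 2).
  by apply: ler_pM => //; lra.
rewrite -sqr_half => H.
have := sqr_ge0 (x / 2 - 2); rewrite expr2 => H2.
nra.
Qed.

Section Softmax.
Variables (R : realType) (n : nat) (a : 'I_n -> R).

Definition softmax (i : 'I_n) : R := expR (a i) / \sum_(v < n) expR (a v).

Lemma softpoolE : softpool a = \sum_(i < n) softmax i * a i.
Proof. by []. Qed.

Lemma softmax_ge0 i : 0 <= softmax i.
Proof. by rewrite divr_ge0 ?sumr_ge0 // => *; apply: expR_ge0. Qed.

Lemma expR_le_sum (m : 'I_n) : expR (a m) <= \sum_(v < n) expR (a v).
Proof.
by rewrite (bigD1 m) //= lerDl sumr_ge0 // => *; apply: expR_ge0.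
Qed.

Lemma sum_expR_gt0 (m : 'I_n) : 0 < \sum_(v < n) expR (a v).
Proof. exact: lt_le_trans (expR_gt0 _) (expR_le_sum m). Qed.

Lemma softmax_le_expR i m : softmax i <= expR (a i - a m).
Proof.
rewrite /softmax expRB ler_wpM2l ?expR_ge0 // lef_pV2 ?posrE ?expR_gt0 //.
  exact: expR_le_sum.
exact: sum_expR_gt0.
Qed.

Lemma sum_softmax (m : 'I_n) : \sum_(i < n) softmax i = 1.
Proof. by rewrite -mulr_suml divff // gt_eqF // (sum_expR_gt0 m). Qed.

Lemma softpool_le_max m : (forall i, a i <= a m) -> softpool a <= a m.
Proof.
move=> a_le; rewrite softpoolE -[leRHS]mul1r -(sum_softmax m) mulr_suml.
by apply: ler_sum => i _; rewrite ler_wpM2l ?softmax_ge0.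
Qed.

Lemma sum_softmax_centered (m : 'I_n) :
  \sum_(i < n) softmax i * (1 + a i - softpool a) = 1.
Proof.
under eq_bigr => i _ do rewrite mulrBr mulrDr mulr1.
rewrite sumrB big_split /= (sum_softmax m) -softpoolE -mulr_suml (sum_softmax m).
lra.
Qed.

Lemma softmax_mul_gap_le i m : softmax i * Num.max 0 (a m - a i - 1) <= 1 / 3.
Proof.
have [gap_le0|gap_gt0] := lerP (a m - a i - 1) 0; first by rewrite mulr0; lra.
apply: le_trans (_ : expR (a i - a m) * (a m - a i - 1) <= _).
  by apply: ler_wpM2r; [exact: ltW | exact: softmax_le_expR].
have := @expR_ge_3_subr1 R (a m - a i).
have := expR_gt0 (a i - a m).
have : expR (a i - a m) * expR (a m - a i) = 1.
  by rewrite -expRD -[RHS]expR0; congr expR; ring.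
nra.
Qed.

Lemma sum_softmax_abs_le : (4 <= n)%N ->
  \sum_(i < n) softmax i * `|1 + a i - softpool a| <= n%:R - 1.
Proof.
move=> n_ge4; have n_gt0 : (0 < n)%N by apply: leq_trans n_ge4.
have [m _ a_le] := @arg_maxP _ _ _ (Ordinal n_gt0) xpredT a isT.
set P := softpool a; pose gap i := Num.max 0 (a m - a i - 1).
have P_le : P <= a m by apply: softpool_le_max => i; apply: a_le.
(* |y| = y + 2 max(0, -y), and -(1 + a_i - P) <= a_m - a_i - 1. *)
have abs_le i : softmax i * `|1 + a i - P| <=
    softmax i * (1 + a i - P) + 2 * (softmax i * gap i).
  rewrite mulrCA -mulrDr ler_wpM2l ?softmax_ge0 //.
  have gap0 : 0 <= gap i by rewrite le_max lexx.
  have gap_ge : a m - a i - 1 <= gap i by rewrite le_max lexx orbT.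
  by case: (lerP 0 (1 + a i - P)) => h; [rewrite ger0_norm | rewrite ltr0_norm]; lra.
apply: le_trans (ler_sum _ (fun i _ => abs_le i)) _.
rewrite big_split /= (sum_softmax_centered m) -mulr_sumr (bigD1 m) //=.
have -> : gap m = 0 by rewrite /gap subrr sub0r max_l ?lerN10.
rewrite mulr0 add0r.
have tail_le : \sum_(i < n | i != m) softmax i * gap i <= (n%:R - 1) / 3.
  apply: le_trans (ler_sum _ (fun i _ => softmax_mul_gap_le i m)) _.
  by rewrite sumr_const cardC1 card_ord -[_ *+ n.-1]mulr_natl -subn1 natrB //; lra.
have : 4 <= n%:R :> R by rewrite (ler_nat R 4 n).
lra.
Qed.

End Softmax.

Section Segment.
Variables (R : realType) (n : nat) (c c' : 'I_n -> R).
Hypothesis n_gt0 : (0 < n)%N.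

Let d i := c i - c' i.
Let seg (s : R) (i : 'I_n) : R := c' i + s * d i.

Lemma softpool_segment_derive (t : R) :
  is_derive t 1 (fun s => softpool (seg s))
    (\sum_(i < n) softmax (seg t) i * (d i * (1 + seg t i - softpool (seg t)))).
Proof.
pose E i s := expR (seg s i).
pose Z := \sum_(i < n) E i.
pose N := \sum_(i < n) (E i * (seg ^~ i)).
have ZE s : Z s = \sum_(i < n) expR (seg s i) by rewrite /Z fct_sumE.
have Z_gt0 s : 0 < Z s by rewrite ZE (sum_expR_gt0 _ (Ordinal n_gt0)).
have Z_neq0 : Z t != 0 by rewrite gt_eqF.
have dseg i : is_derive t 1 (seg ^~ i) (d i).
  have -> : seg ^~ i = cst (c' i) + d i \*: (@id R).
    by apply/funext => s; rewrite /seg /= mulrC.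
  have : is_derive t 1 (cst (c' i) + d i \*: (@id R)) (0 + d i *: 1).
    exact: is_deriveD.
  by rewrite add0r /GRing.scale /= mulr1.
have dE i : is_derive t 1 (E i) (expR (seg t i) * d i).
  exact: is_derive1_comp (is_derive_expR _) (dseg i).
have dZ := is_derive_sum (fun i => dE i).
have dN := is_derive_sum (fun i => is_deriveM (dE i) (dseg i)).
have NE s : N s = softpool (seg s) * Z s.
  rewrite /N fct_sumE ZE /softpool mulr_suml; apply: eq_bigr => i _.
  by rewrite /= mulrAC divfK // gt_eqF // (sum_expR_gt0 _ (Ordinal n_gt0)).
have -> : (fun s => softpool (seg s)) = N * (fun s => (Z s)^-1).
  by apply/funext => s; rewrite -[RHS]/(N s * (Z s)^-1) NE mulfK // gt_eqF.
apply: is_derive_eq (is_deriveM dN (is_deriveV Z_neq0 dZ)) _.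
rewrite /GRing.scale /= -/(N t) NE /E.
set P := softpool (seg t); set S := Z t.
have -> : \sum_(i < n) softmax (seg t) i * (d i * (1 + seg t i - P)) =
    \sum_(i < n) (S^-1 * (expR (seg t i) * d i + seg t i * (expR (seg t i) * d i))
      - (P / S) * (expR (seg t i) * d i)).
  by apply: eq_bigr => i _; rewrite /softmax -(ZE t) -/S; field.
by rewrite sumrB -!mulr_sumr; field.
Qed.

End Segment.

Lemma le_maxdist (R : realType) n (c c' : 'I_n -> R) i :
  `|c i - c' i| <= maxdist c c'.
Proof. by rewrite /maxdist (bigD1 i) //= le_max lexx. Qed.

Lemma maxdist_ge0 (R : realType) n (c c' : 'I_n -> R) : 0 <= maxdist c c'.
Proof. by rewrite /maxdist; elim/big_ind: _ => // x y; rewrite le_max => ->. Qed.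

Lemma softpool_lipschitz (R : realType) n (c c' : 'I_n -> R) : (4 <= n)%N ->
  `|softpool c - softpool c'| <= (n%:R - 1) * maxdist c c'.
Proof.
move=> n_ge4; have n_gt0 : (0 < n)%N by apply: leq_trans n_ge4.
pose seg (s : R) i := c' i + s * (c i - c' i).
have -> : softpool c = softpool (seg 1).
  by congr softpool; apply/funext => i; rewrite /seg mul1r addrC subrK.
have -> : softpool c' = softpool (seg 0).
  by congr softpool; apply/funext => i; rewrite /seg mul0r addr0.
have derive_seg := softpool_segment_derive c c' n_gt0.
have derivable_seg s : derivable (fun s => softpool (seg s)) s 1.
  by case: (derive_seg s).
have [t _ ->] := MVT ltr01 (fun s _ => derive_seg s)
  (derivable_within_continuous (fun s _ => derivable_seg s)).
rewrite subr0 mulr1 /=; set P := softpool (seg t).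
apply: le_trans (ler_norm_sum _ _ _) _.
apply: le_trans (_ : \sum_(i < n) maxdist c c' *
    (softmax (seg t) i * `|1 + seg t i - P|) <= _).
  apply: ler_sum => i _.
  rewrite normrM (ger0_norm (softmax_ge0 _ _)) normrM mulrCA.
  by apply: ler_wpM2r; [rewrite mulr_ge0 ?softmax_ge0 | exact: le_maxdist].
by rewrite -mulr_sumr mulrC ler_wpM2r ?maxdist_ge0 ?sum_softmax_abs_le.
Qed.

Theorem mainTheorem4 (R : realType) (k : nat) (hk : (2 <= k)%N)
  (c c' : 'I_(k ^ 2) -> R) :
  `|softpool c - softpool c'| <= ((k ^ 2)%:R - 1) * maxdist c c'.
Proof.
apply: softpool_lipschitz.
by rewrite -[4%N]/(2 ^ 2)%N leq_exp2r.
Qed.
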